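(* Let $\gamma$ be a positive integer, $1\le n'\le n$, and $\lambda_1,\dots,\lambda_n\in\mathbb C$. Assume (Condition 1) there exist $0\le\theta_{\Lambda'}<2\pi$ and $0<\delta_{\Lambda'}<\pi/2$ with $\{\lambda_1,\dots,\lambda_{n'}\}\subset\{\eta\ne0:|\arg\eta-\theta_{\Lambda'}|<\delta_{\Lambda'}\}$, and (Condition 2) $\sum_{j=1}^{n'}\lambda_jm_j-\lambda_i\ne0$ for all $m\in\mathbb N^{n'}$ with $|m|\ge2$ and all $1\le i\le n$. Let $\mathfrak L=\bigcup_{i=1}^n\{\sum_{j=1}^{n'}\lambda_jm_j-\lambda_i: m\in\mathbb N^{n'},|m|\ge2\}$. Then there exist an interval $\widehat J=(\widehat\theta_0-\widehat\epsilon_0,\widehat\theta_0+\widehat\epsilon_0)$ with $\widehat\epsilon_0>0$ and a constant $C_{\widehat J}>0$ such that $S(\widehat J)\cap(-\overline{\mathfrak L})=\emptyset$ and $$\Big|\gamma\eta+\sum_{j=1}^{n'}\lambda_jm_j-\lambda_i\Big|\ge C_{\widehat J}(|\eta|+|m|)$$ for all $\eta\in S(\widehat J)$, all $1\le i\le n$ and all $m\in\mathbb N^{n'}$ with $|m|\ge2$.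
   Context: $\mathbb N$ is the set of nonnegative integers, $|m|=\sum_j m_j$. For an open interval $J$, $S(J)=\{x\in\mathbb C\setminus\{0\}:\arg x\in J\}$. $\overline{\mathfrak L}$ is the closure of $\mathfrak L$ in $\mathbb C$. *)

From Stdlib Require Import Reals.
From Coquelicot Require Import Coquelicot.
Open Scope R_scope.

Fixpoint csum (k : nat) (f : nat -> C) : C :=
  match k with
  | O => RtoC 0
  | S k' => Cplus (csum k' f) (f k')
  end.

Fixpoint nsum (k : nat) (f : nat -> nat) : nat :=
  match k with
  | O => O
  | S k' => (nsum k' f + f k')%nat
  end.

Definition mabs (n' : nat) (m : nat -> nat) : nat := nsum n' m.

Definition lsum (n' : nat) (lam : nat -> C) (m : nat -> nat) : C :=
  csum n' (fun j => Cmult (lam j) (RtoC (INR (m j)))).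

(* x is a nonzero complex number having an argument phi satisfying P phi
   (arg is taken multivalued: x = |x| e^{i phi}). *)
Definition has_arg_in (P : R -> Prop) (x : C) : Prop :=
  x <> RtoC 0 /\
  exists phi : R, P phi /\ x = (Cmod x * cos phi, Cmod x * sin phi).

Definition sector (a b : R) (x : C) : Prop :=
  has_arg_in (fun phi => a < phi < b) x.

(* The set frak L (indices i : 0..n-1, j : 0..n'-1) *)
Definition frakL (n n' : nat) (lam : nat -> C) (z : C) : Prop :=
  exists (i : nat) (m : nat -> nat),
    (i < n)%nat /\ (2 <= mabs n' m)%nat /\ z = Cminus (lsum n' lam m) (lam i).

Definition cclosure (A : C -> Prop) (z : C) : Prop :=
  forall eps : R, 0 < eps -> exists w, A w /\ Cmod (Cminus z w) < eps.

From Stdlib Require Import Reals List Lra Lia Classical.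
From Coquelicot Require Import Coquelicot.
Open Scope R_scope.

(* Let u = e^{i theta}. Every lambda_j (j < n') has projection at least c > 0 on u, so as
   soon as c |m| >= 2 max_i |lambda_i| the projection of gamma eta + sum_j lambda_j m_j - lambda_i
   on u is already of size |eta| + |m| for eta within pi/3 of theta. The remaining values
   w = sum_j lambda_j m_j - lambda_i are finitely many and nonzero, so some direction t0 within
   pi/6 of theta differs from every -w/|w|; on a thin sector around t0 the angle between eta and
   -w then stays away from 0, which gives |gamma eta + w| >= kappa (|eta| + |w|). With gamma = 1
   the same bound keeps -eta away from the closure of frak L. *)

Definition cdot (u z : C) : R := Re (Cconj u * z).

Definition cdir (t : R) : C := (cos t, sin t).

Definition antidir (w : C) : C := (- w / Cmod w)%C.

Lemma cdot_plus_r (u a b : C) : cdot u (a + b) = cdot u a + cdot u b.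
Proof. unfold cdot, Re; simpl; ring. Qed.

Lemma cdot_opp_r (u z : C) : cdot u (- z) = - cdot u z.
Proof. unfold cdot, Re; simpl; ring. Qed.

Lemma cdot_scal_l (r : R) (u z : C) : cdot (r * u) z = r * cdot u z.
Proof. unfold cdot, Re; simpl; ring. Qed.

Lemma cdot_scal_r (r : R) (u z : C) : cdot u (r * z) = r * cdot u z.
Proof. unfold cdot, Re; simpl; ring. Qed.

Lemma cdot_minus_l (a b z : C) : cdot (a - b) z = cdot a z - cdot b z.
Proof. unfold cdot, Re; simpl; ring. Qed.

Lemma Rabs_cdot_le (u z : C) : Rabs (cdot u z) <= Cmod u * Cmod z.
Proof. unfold cdot. rewrite <- (Cmod_conj u), <- Cmod_mult. apply re_le_Cmod. Qed.

Lemma Cmod_plus_sqr (a b : C) : Cmod (a + b) ^ 2 = Cmod a ^ 2 + Cmod b ^ 2 + 2 * cdot a b.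
Proof. rewrite !Cmod2_alt. unfold cdot, Re, Im; simpl; ring. Qed.

Lemma Cmod_cdir (t : R) : Cmod (cdir t) = 1.
Proof.
  unfold Cmod, cdir; cbn [fst snd]. replace (cos t ^ 2 + sin t ^ 2) with 1; [apply sqrt_1|].
  rewrite <- (sin2_cos2 t). unfold Rsqr. ring.
Qed.

Lemma cdot_cdir_le_Cmod (t : R) (z : C) : cdot (cdir t) z <= Cmod z.
Proof.
  pose proof (Rabs_cdot_le (cdir t) z) as H. rewrite Cmod_cdir, Rmult_1_l in H.
  eapply Rle_trans; [apply Rle_abs | exact H].
Qed.

Lemma cdot_cdir_scal (t r phi : R) : cdot (cdir t) (r * cdir phi) = r * cos (phi - t).
Proof. rewrite cos_minus. unfold cdot, cdir, Re; simpl; ring. Qed.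

Lemma has_arg_in_polar (P : R -> Prop) (x : C) :
  has_arg_in P x -> exists phi, P phi /\ x = (Cmod x * cdir phi)%C.
Proof.
  intros [_ [phi [HP Hx]]]. exists phi. split; [exact HP|].
  rewrite Hx at 1. unfold cdir, Cmult; simpl. f_equal; ring.
Qed.

Lemma cdot_cdir_pos (th : R) (x : C) :
  has_arg_in (fun phi => Rabs (phi - th) < PI / 2) x -> 0 < cdot (cdir th) x.
Proof.
  intros Hx. assert (Hx0 : 0 < Cmod x) by (apply Cmod_gt_0, Hx).
  destruct (has_arg_in_polar _ _ Hx) as [phi [Hphi ->]].
  rewrite cdot_cdir_scal. apply Rabs_def2 in Hphi.
  apply Rmult_lt_0_compat; [exact Hx0 | apply cos_gt_0; lra].
Qed.

Lemma cos_ge_half (x : R) : Rabs x <= PI / 3 -> 1 / 2 <= cos x.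
Proof.
  intros Hx. pose proof PI_RGT_0. rewrite <- cos_PI3.
  destruct (Rle_dec 0 x).
  - rewrite Rabs_pos_eq in Hx by lra. apply cos_decr_1; lra.
  - rewrite Rabs_left in Hx by lra. rewrite <- (cos_neg x). apply cos_decr_1; lra.
Qed.

Lemma Rabs_sin_le (x : R) : Rabs (sin x) <= Rabs x.
Proof.
  assert (Hpos : forall y, 0 <= y -> Rabs (sin y) <= y).
  { intros y Hy. pose proof PI2_3_2. apply Rabs_le. split.
    - destruct (Rle_dec y PI).
      + pose proof (sin_ge_0 y Hy r). lra.
      + pose proof (SIN_bound y). lra.
    - destruct (Req_dec y 0) as [->|Hy0]; [rewrite sin_0; lra|].
      apply Rlt_le, sin_lt_x. lra. }
  destruct (Rle_dec 0 x).
  - rewrite (Rabs_pos_eq x) by lra. apply Hpos; lra.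
  - rewrite <- Rabs_Ropp, <- sin_neg, (Rabs_left x) by lra. apply Hpos; lra.
Qed.

Lemma Cmod_cdir_minus (a b : R) : Cmod (cdir a - cdir b) <= Rabs (a - b).
Proof.
  assert (Hsq : Cmod (cdir a - cdir b) ^ 2 = 4 * sin ((a - b) / 2) ^ 2).
  { replace (4 * sin ((a - b) / 2) ^ 2) with (2 - 2 * cos (2 * ((a - b) / 2)))
      by (rewrite cos_2a_sin; ring).
    replace (2 * ((a - b) / 2)) with (a - b) by field.
    rewrite Cmod2_alt, cos_minus. pose proof (sin2_cos2 a). pose proof (sin2_cos2 b).
    unfold Rsqr, cdir, Re, Im in *; simpl. nra. }
  pose proof (Rabs_sin_le ((a - b) / 2)) as Hs.
  rewrite Rabs_div, (Rabs_pos_eq 2) in Hs by lra.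
  pose proof (Rabs_pos (sin ((a - b) / 2))). pose proof (Rabs_pos (a - b)).
  pose proof (Cmod_ge_0 (cdir a - cdir b)).
  rewrite <- (pow2_abs (sin _)) in Hsq. nra.
Qed.

Lemma cdir_inj_on (a h t1 t2 : R) :
  h <= PI -> a <= t1 <= a + h -> a <= t2 <= a + h -> cdir t1 = cdir t2 -> t1 = t2.
Proof.
  intros Hh H1 H2 E. unfold cdir in E. injection E as Ec Es.
  assert (Hc : forall x y, cos x = cos y -> sin x = sin y -> cos (y - x) = 1).
  { intros x y Hcos Hsin. rewrite cos_minus, <- Hcos, <- Hsin, <- (sin2_cos2 x).
    unfold Rsqr. ring. }
  destruct (Rtotal_order t1 t2) as [L|[Eq|L]]; [exfalso | exact Eq | exfalso].
  - pose proof (cos_decreasing_1 0 (t2 - t1)). rewrite cos_0, (Hc t1 t2) in H; auto; lra.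
  - pose proof (cos_decreasing_1 0 (t1 - t2)). rewrite cos_0, (Hc t2 t1) in H; auto; lra.
Qed.

Lemma Cmod_scal_plus_ge (e w : C) (r tau : R) :
  Cmod e = 1 -> 0 < tau <= 1 -> 0 <= r -> (tau - 1) * Cmod w <= cdot e w ->
  sqrt (tau / 2) * (r + Cmod w) <= Cmod (r * e + w).
Proof.
  intros He Htau Hr Hew.
  assert (Hsq : Cmod (r * e + w) ^ 2 = r ^ 2 + Cmod w ^ 2 + 2 * r * cdot e w).
  { rewrite Cmod_plus_sqr, Cmod_mult, Cmod_R, He, cdot_scal_l, Rabs_pos_eq by lra. ring. }
  assert (Hk : sqrt (tau / 2) ^ 2 = tau / 2) by (apply pow2_sqrt; lra).
  pose proof (sqrt_pos (tau / 2)). pose proof (Cmod_ge_0 w).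
  pose proof (Cmod_ge_0 (r * e + w)).
  (* the excess over [tau/2 (r + |w|)^2] is at least [(1 - tau/2) (r - |w|)^2] *)
  assert (Hexcess : (1 - tau / 2) * (r - Cmod w) ^ 2
                    <= Cmod (r * e + w) ^ 2 - tau / 2 * (r + Cmod w) ^ 2) by nra.
  assert (0 <= (1 - tau / 2) * (r - Cmod w) ^ 2) by (apply Rmult_le_pos; [lra | apply pow2_ge_0]).
  nra.
Qed.

Lemma cdot_gt_neg_Cmod (e w : C) :
  Cmod e = 1 -> w <> 0 -> e <> antidir w -> - Cmod w < cdot e w.
Proof.
  intros He Hw Hne. assert (Hw0 : 0 < Cmod w) by (apply Cmod_gt_0, Hw).
  pose proof (Rabs_cdot_le e w) as Hcs. rewrite He, Rmult_1_l in Hcs.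
  assert (Hlow : - Cmod w <= cdot e w).
  { pose proof (Rle_abs (- cdot e w)). rewrite Rabs_Ropp in *. lra. }
  destruct (Rle_lt_or_eq_dec _ _ Hlow) as [Hlt | Heq]; [exact Hlt | exfalso].
  apply Hne.
  assert (Hz : Cmod (Cmod w * e + w) ^ 2 = 0).
  { rewrite Cmod_plus_sqr, Cmod_mult, Cmod_R, He, cdot_scal_l, Rabs_pos_eq, <- Heq by lra.
    ring. }
  assert (Hz0 : (Cmod w * e + w = 0)%C).
  { apply Cmod_eq_0, NNPP. intros Hnz. exact (pow_nonzero _ 2 Hnz Hz). }
  assert (E : (Cmod w * e = - w)%C) by (rewrite <- (Cplus_0_l (- w)), <- Hz0; ring).
  unfold antidir. rewrite <- E. field.
  intros H0. injection H0. lra.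
Qed.

Lemma cdot_perturb_l (e e' w : C) : cdot e w - Cmod (e - e') * Cmod w <= cdot e' w.
Proof.
  pose proof (Rabs_cdot_le (e - e') w) as H. rewrite cdot_minus_l in H.
  pose proof (Rle_abs (cdot e w - cdot e' w)). lra.
Qed.

Lemma list_min_pos {A : Type} (f : A -> R) (l : list A) :
  (forall x, In x l -> 0 < f x) -> exists tau, 0 < tau /\ forall x, In x l -> tau <= f x.
Proof.
  induction l as [|a l IH]; intros Hpos.
  - exists 1. split; [lra | intros x []].
  - destruct IH as [tau [Htau Hle]]; [intros x Hx; apply Hpos; right; exact Hx|].
    exists (Rmin tau (f a)). split.
    + apply Rmin_glb_lt; [exact Htau | apply Hpos; left; reflexivity].
    + intros x [<- | Hx]; [apply Rmin_r|].
      eapply Rle_trans; [apply Rmin_l | apply Hle, Hx].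
Qed.

Lemma list_upper_bound {A : Type} (f : A -> R) (l : list A) :
  exists M, forall x, In x l -> f x <= M.
Proof.
  induction l as [|a l [M HM]]; [exists 0; intros x []|].
  exists (Rmax (f a) M). intros x [<- | Hx]; [apply Rmax_l|].
  eapply Rle_trans; [apply HM, Hx | apply Rmax_r].
Qed.

Lemma exists_not_in {A : Type} (l1 l2 : list A) :
  NoDup l1 -> (length l2 < length l1)%nat -> exists x, In x l1 /\ ~ In x l2.
Proof.
  intros Hnd Hlen. apply NNPP. intros Hno.
  assert (Hincl : incl l1 l2).
  { intros x Hx. apply NNPP. intros Hx2. apply Hno. exists x. split; assumption. }
  pose proof (NoDup_incl_length Hnd Hincl). lia.
Qed.

(* Pigeonhole on a grid of [length B + 1] angles in [a, a + h]. *)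
Lemma exists_cdir_not_in (B : list C) (a h : R) :
  0 < h <= PI -> exists t, a <= t <= a + h /\ ~ In (cdir t) B.
Proof.
  intros Hh.
  set (N := length B). set (s := h / INR (S N)).
  assert (Hs : 0 < s) by (apply Rdiv_lt_0_compat; [lra | apply lt_0_INR; lia]).
  assert (Hgrid : forall k, (k <= N)%nat -> a <= a + INR k * s <= a + h).
  { intros k Hk. pose proof (pos_INR k). apply le_INR in Hk.
    assert (Hsh : INR (S N) * s = h) by (unfold s; field; apply not_0_INR; lia).
    rewrite S_INR in Hsh. nra. }
  destruct (exists_not_in (map (fun k => cdir (a + INR k * s)) (seq 0 (S N))) B)
    as [e [He Hout]].
  - apply NoDup_map_NoDup_ForallPairs; [| apply seq_NoDup].
    intros k1 k2 Hk1 Hk2 E. apply in_seq in Hk1, Hk2.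
    apply (cdir_inj_on a h) in E; [| lra | apply Hgrid; lia | apply Hgrid; lia].
    apply INR_eq, (Rmult_eq_reg_r s); lra.
  - rewrite length_map, length_seq. unfold N. lia.
  - apply in_map_iff in He as [k [<- Hk]]. apply in_seq in Hk.
    exists (a + INR k * s). split; [apply Hgrid; lia | exact Hout].
Qed.

Lemma cdot_margin_uniform (e : C) (wl : list C) :
  Cmod e = 1 -> (forall w, In w wl -> w <> 0 /\ e <> antidir w) ->
  exists tau, 0 < tau <= 1 /\ forall w, In w wl -> (tau - 1) * Cmod w <= cdot e w.
Proof.
  intros He Hwl.
  destruct (list_min_pos (fun w => (cdot e w + Cmod w) / Cmod w) wl) as [tau [Htau Hle]].
  { intros w Hw. destruct (Hwl w Hw) as [Hw0 Hne].
    pose proof (cdot_gt_neg_Cmod e w He Hw0 Hne). apply Cmod_gt_0 in Hw0.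
    apply Rdiv_lt_0_compat; lra. }
  exists (Rmin tau 1). split; [split; [apply Rmin_glb_lt; lra | apply Rmin_r]|].
  intros w Hw. specialize (Hle w Hw). destruct (Hwl w Hw) as [Hw0 _].
  apply Cmod_gt_0 in Hw0. apply Rle_div_r in Hle; [| exact Hw0].
  pose proof (Rmin_l tau 1). nra.
Qed.

Lemma exists_sector_Cmod_ge (wl : list C) (a h : R) :
  0 < h <= PI -> (forall w, In w wl -> w <> 0) ->
  exists t0 eps kappa, a <= t0 <= a + h /\ 0 < eps /\ 0 < kappa /\
    forall phi r w, Rabs (phi - t0) < eps -> 0 <= r -> In w wl ->
      kappa * (r + Cmod w) <= Cmod (r * cdir phi + w).
Proof.
  intros Hh Hwl.
  destruct (exists_cdir_not_in (map antidir wl) a h Hh) as [t0 [Ht0 Hout]].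
  destruct (cdot_margin_uniform (cdir t0) wl (Cmod_cdir t0)) as [tau [Htau Hmargin]].
  { intros w Hw. split; [apply Hwl, Hw|]. intros E. apply Hout. rewrite E. apply in_map, Hw. }
  exists t0, (tau / 2), (sqrt (tau / 2 / 2)).
  split; [exact Ht0|]. split; [lra|]. split; [apply sqrt_lt_R0; lra|].
  intros phi r w Hphi Hr Hw.
  apply Cmod_scal_plus_ge; [apply Cmod_cdir | lra | exact Hr |].
  pose proof (cdot_perturb_l (cdir t0) (cdir phi) w).
  pose proof (Cmod_cdir_minus t0 phi). rewrite Rabs_minus_sym in Hphi.
  specialize (Hmargin w Hw). pose proof (Cmod_ge_0 w).
  pose proof (Cmod_ge_0 (cdir t0 - cdir phi)). nra.
Qed.

Lemma lsum_ext (p : nat) (lam : nat -> C) (f m : nat -> nat) :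
  (forall j, (j < p)%nat -> f j = m j) -> lsum p lam f = lsum p lam m.
Proof.
  unfold lsum. induction p as [|p IH]; intros H; [reflexivity|]. simpl.
  rewrite IH by (intros; apply H; lia). rewrite H by lia. reflexivity.
Qed.

Lemma mabs_ext (p : nat) (f m : nat -> nat) :
  (forall j, (j < p)%nat -> f j = m j) -> mabs p f = mabs p m.
Proof.
  unfold mabs. induction p as [|p IH]; intros H; [reflexivity|]. simpl.
  rewrite IH by (intros; apply H; lia). rewrite H by lia. reflexivity.
Qed.

Lemma le_mabs (p : nat) (m : nat -> nat) (j : nat) : (j < p)%nat -> (m j <= mabs p m)%nat.
Proof.
  unfold mabs. induction p as [|p IH]; simpl; intros Hj; [lia|].
  destruct (Nat.eq_dec j p) as [-> | Hne]; [lia|]. specialize (IH ltac:(lia)). lia.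
Qed.

Lemma cdot_lsum_ge (u : C) (lam : nat -> C) (c : R) (p : nat) (m : nat -> nat) :
  (forall j, (j < p)%nat -> c <= cdot u (lam j)) ->
  c * INR (mabs p m) <= cdot u (lsum p lam m).
Proof.
  unfold mabs, lsum. induction p as [|p IH]; intros H.
  - unfold cdot, Re; simpl. lra.
  - simpl. rewrite cdot_plus_r, plus_INR, Cmult_comm, cdot_scal_r.
    specialize (IH (fun j Hj => H j ltac:(lia))).
    pose proof (H p ltac:(lia)). pose proof (pos_INR (m p)). nra.
Qed.

Lemma bounded_multiindices_finite (p K : nat) :
  exists l : list (nat -> nat), forall m, (forall j, (j < p)%nat -> (m j <= K)%nat) ->
    exists f, In f l /\ forall j, (j < p)%nat -> f j = m j.
Proof.
  induction p as [|p [l Hl]].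
  - exists ((fun _ => 0%nat) :: nil). intros m _.
    exists (fun _ => 0%nat). split; [left; reflexivity | intros; lia].
  - exists (flat_map (fun f => map (fun a j => if Nat.eqb j p then a else f j) (seq 0 (S K))) l).
    intros m Hm. destruct (Hl m) as [f [Hf Hfm]]; [intros j Hj; apply Hm; lia|].
    exists (fun j => if Nat.eqb j p then m p else f j). split.
    + apply in_flat_map. exists f. split; [exact Hf|].
      apply in_map_iff. exists (m p). split; [reflexivity|].
      apply in_seq. specialize (Hm p). lia.
    + intros j Hj. destruct (Nat.eqb_spec j p) as [-> | Hne]; [reflexivity|]. apply Hfm. lia.
Qed.

Lemma frakL_bounded_finite (n n' : nat) (lam : nat -> C) (K : nat) :
  exists wl : list C, (forall w, In w wl -> frakL n n' lam w) /\
    forall i m, (i < n)%nat -> (2 <= mabs n' m)%nat -> (mabs n' m <= K)%nat ->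
      In (lsum n' lam m - lam i)%C wl.
Proof.
  destruct (bounded_multiindices_finite n' K) as [l Hl].
  exists (flat_map (fun i => map (fun f => lsum n' lam f - lam i)%C
                                 (filter (fun f => Nat.leb 2 (mabs n' f)) l)) (seq 0 n)).
  split.
  - intros w Hw. apply in_flat_map in Hw as [i [Hi Hw]].
    apply in_map_iff in Hw as [f [<- Hf]]. apply filter_In in Hf as [_ Hf].
    apply Nat.leb_le in Hf. apply in_seq in Hi. exists i, f. repeat split; [lia | exact Hf].
  - intros i m Hi Hm HmK. destruct (Hl m) as [f [Hf Hfm]].
    { intros j Hj. pose proof (le_mabs n' m j Hj). lia. }
    apply in_flat_map. exists i. split; [apply in_seq; lia|].
    apply in_map_iff. exists f. split; [rewrite (lsum_ext _ _ _ _ Hfm); reflexivity|].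
    apply filter_In. split; [exact Hf|]. apply Nat.leb_le. rewrite (mabs_ext _ _ _ Hfm). exact Hm.
Qed.

Lemma Cmod_ge_of_large_mabs (th c M g r phi : R) (n' : nat) (lam : nat -> C) (l : C)
    (m : nat -> nat) :
  (forall j, (j < n')%nat -> c <= cdot (cdir th) (lam j)) ->
  Cmod l <= M -> 2 * M <= c * INR (mabs n' m) ->
  1 <= g -> 0 <= r -> Rabs (phi - th) <= PI / 3 ->
  Rmin (1 / 2) (c / 2) * (r + INR (mabs n' m)) <= Cmod (g * (r * cdir phi) + lsum n' lam m - l).
Proof.
  intros Hproj Hl Hfar Hg Hr Hphi.
  eapply Rle_trans; [| apply (cdot_cdir_le_Cmod th)].
  unfold Cminus. rewrite !cdot_plus_r, cdot_opp_r, cdot_scal_r, cdot_cdir_scal.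
  pose proof (cos_ge_half _ Hphi). pose proof (cdot_lsum_ge _ _ _ n' m Hproj).
  pose proof (cdot_cdir_le_Cmod th l). pose proof (pos_INR (mabs n' m)).
  assert (Rmin (1 / 2) (c / 2) * r <= 1 / 2 * r) by (apply Rmult_le_compat_r, Rmin_l; lra).
  assert (Rmin (1 / 2) (c / 2) * INR (mabs n' m) <= c / 2 * INR (mabs n' m))
    by (apply Rmult_le_compat_r, Rmin_r; lra).
  assert (1 / 2 <= g * cos (phi - th)) by nra.
  assert (1 / 2 * r <= g * (r * cos (phi - th))) by nra.
  lra.
Qed.

Lemma Cmod_ge_of_bounded_mabs (n n' : nat) (lam : nat -> C) (th : R) (K : nat) :
  (forall z, frakL n n' lam z -> z <> 0) ->
  exists t0 eps C0, th <= t0 <= th + PI / 6 /\ 0 < eps /\ 0 < C0 /\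
    forall g r phi i m, 1 <= g -> 0 <= r -> Rabs (phi - t0) < eps -> (i < n)%nat ->
      (2 <= mabs n' m)%nat -> (mabs n' m <= K)%nat ->
      C0 * (r + INR (mabs n' m)) <= Cmod (g * (r * cdir phi) + lsum n' lam m - lam i).
Proof.
  intros Hnz. pose proof PI_RGT_0.
  destruct (frakL_bounded_finite n n' lam K) as [wl [HwlL Hwl]].
  destruct (exists_sector_Cmod_ge wl th (PI / 6)) as [t0 [eps [kap [Ht0 [Heps [Hkap Haway]]]]]];
    [lra | intros w Hw; apply Hnz, HwlL, Hw |].
  destruct (list_min_pos Cmod wl) as [wm [Hwm Hwm_le]];
    [intros w Hw; apply Cmod_gt_0, Hnz, HwlL, Hw |].
  assert (HK : 0 < INR (S K)) by (apply lt_0_INR; lia).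
  exists t0, eps, (Rmin kap (kap * wm / INR (S K))).
  split; [exact Ht0 |]. split; [exact Heps |].
  split; [apply Rmin_glb_lt; [exact Hkap | apply Rdiv_lt_0_compat; nra] |].
  intros g r phi i m Hg Hr Hphi Hi Hm HmK.
  set (w := (lsum n' lam m - lam i)%C).
  assert (Hw : In w wl) by (apply Hwl; assumption).
  replace (g * (r * cdir phi) + lsum n' lam m - lam i)%C with ((g * r)%R * cdir phi + w)%C
    by (rewrite RtoC_mult; unfold w; ring).
  eapply Rle_trans; [| apply Haway; [exact Hphi | nra | exact Hw]].
  assert (Hr_term : Rmin kap (kap * wm / INR (S K)) * r <= kap * (g * r)).
  { apply Rle_trans with (kap * r); [apply Rmult_le_compat_r; [lra | apply Rmin_l] |].
    apply Rmult_le_compat_l; nra. }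
  assert (Hm_term : Rmin kap (kap * wm / INR (S K)) * INR (mabs n' m) <= kap * Cmod w).
  { apply Rle_trans with (kap * wm / INR (S K) * INR (S K)).
    - apply Rmult_le_compat; [apply Rlt_le, Rmin_glb_lt; [lra | apply Rdiv_lt_0_compat; nra]
                             | apply pos_INR | apply Rmin_r | apply le_INR; lia].
    - field_simplify; [| lra]. apply Rmult_le_compat_l; [lra | apply Hwm_le, Hw]. }
  lra.
Qed.

Theorem frakL_sector_estimate (n n' : nat) (lam : nat -> C) (th c : R) :
  0 < c -> (forall j, (j < n')%nat -> c <= cdot (cdir th) (lam j)) ->
  (forall z, frakL n n' lam z -> z <> 0) ->
  exists t0 eps CJ, 0 < eps /\ 0 < CJ /\
    forall g eta i m, 1 <= g -> sector (t0 - eps) (t0 + eps) eta -> (i < n)%nat ->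
      (2 <= mabs n' m)%nat ->
      CJ * (Cmod eta + INR (mabs n' m)) <= Cmod (g * eta + lsum n' lam m - lam i).
Proof.
  intros Hc Hproj Hnz. pose proof PI_RGT_0.
  destruct (list_upper_bound (fun i => Cmod (lam i)) (seq 0 n)) as [M HM].
  destruct (INR_unbounded (2 * M / c)) as [K HK].
  destruct (Cmod_ge_of_bounded_mabs n n' lam th K Hnz)
    as [t0 [eps [C0 [Ht0 [Heps [HC0 Hnear_bound]]]]]].
  exists t0, (Rmin eps (PI / 6)), (Rmin (Rmin (1 / 2) (c / 2)) C0).
  split; [apply Rmin_glb_lt; lra |]. split; [repeat apply Rmin_glb_lt; lra |].
  intros g eta i m Hg Heta Hi Hm.
  destruct (has_arg_in_polar _ _ Heta) as [phi [Hphi Eeta]].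
  pose proof (Rmin_l eps (PI / 6)). pose proof (Rmin_r eps (PI / 6)).
  pose proof (Cmod_ge_0 eta). pose proof (pos_INR (mabs n' m)).
  set (r := Cmod eta) in *. rewrite Eeta.
  destruct (Rle_lt_dec (2 * M) (c * INR (mabs n' m))) as [Hfar | Hnear].
  - eapply Rle_trans; [| apply (Cmod_ge_of_large_mabs th c M) with (n' := n'); auto].
    + apply Rmult_le_compat_r; [lra | apply Rmin_l].
    + apply HM, in_seq. lia.
    + apply Rabs_le. lra.
  - assert (HmK : (mabs n' m <= K)%nat).
    { assert (HKc : 2 * M < c * INR K).
      { replace (2 * M) with (c * (2 * M / c)) by (field; lra).
        apply Rmult_lt_compat_l; lra. }
      apply Nat.lt_le_incl, INR_lt, (Rmult_lt_reg_l c); lra. }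
    eapply Rle_trans; [| apply Hnear_bound; auto; apply Rabs_def1; lra].
    apply Rmult_le_compat_r; [lra | apply Rmin_r].
Qed.

Lemma not_cclosure_of_gap (A : C -> Prop) (y : C) (d : R) :
  0 < d -> (forall z, A z -> d <= Cmod (y - z)) -> ~ cclosure A y.
Proof.
  intros Hd Hgap Hcl. destruct (Hcl d Hd) as [z [Hz Hlt]].
  specialize (Hgap z Hz). lra.
Qed.


Theorem lemma2p3 (gamma n n' : nat) (lam : nat -> C) :
  (0 < gamma)%nat -> (1 <= n')%nat -> (n' <= n)%nat ->
  (* Condition 1 *)
  (exists theta delta : R,
      0 <= theta < 2 * PI /\ 0 < delta < PI / 2 /\
      forall j : nat, (j < n')%nat ->
        has_arg_in (fun phi => Rabs (phi - theta) < delta) (lam j)) ->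
  (* Condition 2 *)
  (forall (m : nat -> nat) (i : nat), (2 <= mabs n' m)%nat -> (i < n)%nat ->
      Cminus (lsum n' lam m) (lam i) <> RtoC 0) ->
  exists theta0 eps0 CJ : R,
    0 < eps0 /\ 0 < CJ /\
    (forall x : C, sector (theta0 - eps0) (theta0 + eps0) x ->
        ~ cclosure (frakL n n' lam) (Copp x)) /\
    (forall (eta : C) (i : nat) (m : nat -> nat),
        sector (theta0 - eps0) (theta0 + eps0) eta -> (i < n)%nat ->
        (2 <= mabs n' m)%nat ->
        CJ * (Cmod eta + INR (mabs n' m)) <=
        Cmod (Cminus (Cplus (Cmult (RtoC (INR gamma)) eta) (lsum n' lam m)) (lam i))).
Proof.
  intros Hgamma _ _ [th [delta [_ [Hdelta Harg]]]] Hcond2.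
  destruct (list_min_pos (fun j => cdot (cdir th) (lam j)) (seq 0 n')) as [c [Hc Hproj]].
  { intros j Hj. apply in_seq in Hj. destruct (Harg j ltac:(lia)) as [Hne [phi [Hphi Hpol]]].
    apply cdot_cdir_pos. split; [exact Hne|]. exists phi. split; [lra | exact Hpol]. }
  destruct (frakL_sector_estimate n n' lam th c) as [t0 [eps [CJ [Heps [HCJ Hest]]]]].
  - exact Hc.
  - intros j Hj. apply Hproj, in_seq. lia.
  - intros z [i [m [Hi [Hm ->]]]]. apply Hcond2; assumption.
  - exists t0, eps, CJ. split; [exact Heps|]. split; [exact HCJ|]. split.
    + intros x Hx. apply not_cclosure_of_gap with (CJ * Cmod x).
      { apply Rmult_lt_0_compat; [exact HCJ | apply Cmod_gt_0, Hx]. }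
      intros z [i [m [Hi [Hm ->]]]].
      replace (- x - (lsum n' lam m - lam i))%C with (- (1 * x + lsum n' lam m - lam i))%C
        by ring.
      rewrite Cmod_opp. pose proof (Hest 1 x i m (Rle_refl 1) Hx Hi Hm).
      pose proof (pos_INR (mabs n' m)). nra.
    + intros eta i m Heta Hi Hm. apply Hest; try assumption. apply (le_INR 1). lia.
Qed.
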